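(* Let $\mathcal P$ be a Poisson $n$-Lie algebra over an arbitrary field $\mathbb F$. For any $a\in\mathcal P$ and $\lambda\in\mathbb F$, the generalized eigenspace $$P_{a,\lambda}=\{x\in\mathcal P\mid (P_a-\lambda)^k(x)=0\text{ for some }k\in\mathbb N\}$$ is an ideal of $\mathcal P$, where $P_a(z)=a\cdot z$.
   Context: A Poisson $n$-Lie algebra is a commutative associative algebra $(\mathcal P,\cdot)$ with an $n$-linear skew-symmetric bracket satisfying the fundamental identity $[x_1,\dots,x_{n-1},[y_1,\dots,y_n]]=\sum_{i=1}^n[y_1,\dots,[x_1,\dots,x_{n-1},y_i],\dots,y_n]$ and the Leibniz rule $[y\cdot z,x_2,\dots,x_n]=y\cdot[z,x_2,\dots,x_n]+z\cdot[y,x_2,\dots,x_n]$. An ideal is a subspace $\mathcal I$ with $\mathcal P\cdot\mathcal I\subseteq\mathcal I$ and $[\mathcal I,\mathcal P,\dots,\mathcal P]\subseteq\mathcal I$ (linear spans). *)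

From HB Require Import structures.
From mathcomp Require Import all_boot all_order all_fingroup all_algebra.
Set Implicit Arguments. Unset Strict Implicit. Unset Printing Implicit Defensive.
Import GRing.Theory.
Local Open Scope ring_scope.

Section PoissonNLie.
Variables (F : fieldType) (V : lmodType F) (n : nat).

Definition upd (x : {ffun 'I_n -> V}) (i : 'I_n) (v : V) : {ffun 'I_n -> V} :=
  [ffun j => if j == i then v else x j].

Definition setlast (x : {ffun 'I_n -> V}) (v : V) : {ffun 'I_n -> V} :=
  [ffun j : 'I_n => if val j == n.-1 then v else x j].

(* (P, mul, br) is a Poisson n-Lie algebra over F:
   - mul is a bilinear commutative associative product (not necessarily unital);
   - br is n-linear, skew-symmetric, satisfies the fundamental identity
     and the Leibniz rule in its first argument. *)
Definition is_poisson_nLie (mul : V -> V -> V) (br : {ffun 'I_n -> V} -> V) : Prop :=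
  (forall (c : F) (x y z : V), mul (c *: x + y) z = c *: mul x z + mul y z) /\
  (forall x y : V, mul x y = mul y x) /\
  (forall x y z : V, mul x (mul y z) = mul (mul x y) z) /\
  [/\
      (forall (x : {ffun 'I_n -> V}) (i : 'I_n) (c : F) (u v : V),
          br (upd x i (c *: u + v)) = c *: br (upd x i u) + br (upd x i v)),
      (forall (x : {ffun 'I_n -> V}) (s : 'S_n),
          br [ffun i => x (s i)] = ((-1) ^+ odd_perm s) *: br x),
      (forall x y : {ffun 'I_n -> V},
          br (setlast x (br y)) =
          \sum_(i < n) br (upd y i (br (setlast x (y i)))) ) &
      (forall (x : {ffun 'I_n -> V}) (i : 'I_n) (y z : V), val i = 0%N ->
          br (upd x i (mul y z)) = mul y (br (upd x i z)) + mul z (br (upd x i y)))].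

Definition is_ideal (mul : V -> V -> V) (br : {ffun 'I_n -> V} -> V) (I : V -> Prop) : Prop :=
  [/\ I 0,
      (forall (c : F) (x y : V), I x -> I y -> I (c *: x + y)),
      (forall p x : V, I x -> I (mul p x)) &
      (forall (x : {ffun 'I_n -> V}) (i : 'I_n), val i = 0%N -> I (x i) -> I (br x))].

Definition gen_eigenspace (mul : V -> V -> V) (a : V) (lambda : F) (x : V) : Prop :=
  exists k : nat, iter k (fun z => mul a z - lambda *: z) x = 0.

End PoissonNLie.

From mathcomp Require Import all_boot all_order all_fingroup all_algebra.
Set Implicit Arguments. Unset Strict Implicit. Unset Printing Implicit Defensive.
Import GRing.Theory.
Local Open Scope ring_scope.

(* Write f = P_a - lambda.  By commutativity and associativity every P_p
   commutes with f, which gives closure under products.  For the bracket,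
   D = [-, x_2, ..., x_n] is a derivation of the product, so f D - D f = - P_(D a);
   as P_(D a) commutes with f this integrates to
     f^(m+1) D = D f^(m+1) - (m+1) P_(D a) f^m,
   and both terms vanish on x once f^m x = 0.  Hence only the linearity and
   the Leibniz rule of the bracket are used: neither n >= 2, nor
   skew-symmetry, nor the fundamental identity. *)

Section GeneralizedEigenspace.
Variables (F : fieldType) (V : lmodType F) (mul : V -> V -> V).
Hypothesis mul_linear_l :
  forall (c : F) (x y z : V), mul (c *: x + y) z = c *: mul x z + mul y z.
Hypothesis mulC : forall x y : V, mul x y = mul y x.
Hypothesis mulA : forall x y z : V, mul x (mul y z) = mul (mul x y) z.

Lemma mul_linear_r (c : F) (p x y : V) :
  mul p (c *: x + y) = c *: mul p x + mul p y.
Proof. by rewrite mulC mul_linear_l (mulC x) (mulC y). Qed.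

Lemma mul_0r (p : V) : mul p 0 = 0.
Proof.
by have := mul_linear_r (-1) p 0 0; rewrite scaler0 addr0 scaleN1r addNr.
Qed.

Variables (a : V) (lambda : F).

Definition eigen_shift (z : V) : V := mul a z - lambda *: z.

Local Notation f := eigen_shift.

Lemma eigen_shift_linear (c : F) (x y : V) : f (c *: x + y) = c *: f x + f y.
Proof.
by rewrite /f mul_linear_r scalerDr scalerA mulrC -scalerA scalerBr opprD addrACA.
Qed.

Lemma eigen_shift0 : f 0 = 0.
Proof. by rewrite /f mul_0r scaler0 subr0. Qed.

Lemma eigen_shiftZ (c : F) (x : V) : f (c *: x) = c *: f x.
Proof. by have := eigen_shift_linear c x 0; rewrite !addr0 eigen_shift0 addr0. Qed.

Lemma eigen_shiftB (x y : V) : f (x - y) = f x - f y.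
Proof. by rewrite addrC -scaleN1r eigen_shift_linear scaleN1r addrC. Qed.

Lemma eigen_shift_mul (p x : V) : f (mul p x) = mul p (f x).
Proof.
have -> : f x = (- lambda) *: x + mul a x by rewrite /f addrC scaleNr.
by rewrite mul_linear_r /f mulA (mulC a p) -mulA scaleNr addrC.
Qed.

Lemma iter_eigen_shift_linear k (c : F) (x y : V) :
  iter k f (c *: x + y) = c *: iter k f x + iter k f y.
Proof. by elim: k => [//|k IHk] /=; rewrite IHk eigen_shift_linear. Qed.

Lemma iter_eigen_shift0 k : iter k f 0 = 0.
Proof. by elim: k => [//|k IHk] /=; rewrite IHk eigen_shift0. Qed.

Lemma iter_eigen_shift_mul k (p x : V) : iter k f (mul p x) = mul p (iter k f x).
Proof. by elim: k => [//|k IHk] /=; rewrite IHk eigen_shift_mul. Qed.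

Lemma iter_eigen_shift_eq0_addn m {k} {x : V} :
  iter k f x = 0 -> iter (m + k) f x = 0.
Proof. by move=> fkx; rewrite iterD fkx iter_eigen_shift0. Qed.

Lemma gen_eigenspace0 : gen_eigenspace mul a lambda 0.
Proof. by exists 0%N. Qed.

Lemma gen_eigenspace_linear (c : F) (x y : V) :
  gen_eigenspace mul a lambda x -> gen_eigenspace mul a lambda y ->
  gen_eigenspace mul a lambda (c *: x + y).
Proof.
move=> [k fkx] [l fly]; exists (k + l)%N.
rewrite (iter_eigen_shift_linear (k + l)) (iter_eigen_shift_eq0_addn k fly).
by rewrite addnC (iter_eigen_shift_eq0_addn l fkx) scaler0 addr0.
Qed.

Lemma gen_eigenspace_mul (p x : V) :
  gen_eigenspace mul a lambda x -> gen_eigenspace mul a lambda (mul p x).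
Proof. by move=> [k fkx]; exists k; rewrite iter_eigen_shift_mul fkx mul_0r. Qed.

Section Derivation.
Variable D : V -> V.
Hypothesis D_linear : forall (c : F) (u v : V), D (c *: u + v) = c *: D u + D v.
Hypothesis D_leibniz : forall y z : V, D (mul y z) = mul y (D z) + mul z (D y).

Lemma derivation0 : D 0 = 0.
Proof. by have := D_linear (-1) 0 0; rewrite scaler0 addr0 scaleN1r addNr. Qed.

Lemma eigen_shift_derivation (w : V) : f (D w) = D (f w) - mul (D a) w.
Proof.
have -> : f w = (- lambda) *: w + mul a w by rewrite /f addrC scaleNr.
by rewrite D_linear D_leibniz (mulC w) /f addrA addrK scaleNr addrC.
Qed.

Lemma iter_eigen_shift_derivation m (z : V) :
  iter m.+1 f (D z) = D (iter m.+1 f z) - m.+1%:R *: mul (D a) (iter m f z).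
Proof.
elim: m => [|m IHm]; first by rewrite /= eigen_shift_derivation scale1r.
rewrite iterS IHm eigen_shiftB eigen_shiftZ eigen_shift_mul eigen_shift_derivation.
by rewrite -addrA -opprD -{1}(scale1r (mul _ _)) -scalerDl -mulrS.
Qed.

Lemma gen_eigenspace_derivation (x : V) :
  gen_eigenspace mul a lambda x -> gen_eigenspace mul a lambda (D x).
Proof.
move=> [k fkx]; exists k.+1.
rewrite iter_eigen_shift_derivation iterS fkx.
by rewrite eigen_shift0 mul_0r scaler0 derivation0 subr0.
Qed.

End Derivation.
End GeneralizedEigenspace.

Lemma upd_id (F : fieldType) (V : lmodType F) (n : nat)
    (x : {ffun 'I_n -> V}) (i : 'I_n) :
  upd x i (x i) = x.
Proof. by apply/ffunP => j; rewrite ffunE; case: eqP => // ->. Qed.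

Theorem proposition5p21 (F : fieldType) (V : lmodType F) (n : nat)
  (mul : V -> V -> V) (br : {ffun 'I_n -> V} -> V) :
  (2 <= n)%N -> is_poisson_nLie mul br ->
  forall (a : V) (lambda : F), is_ideal mul br (gen_eigenspace mul a lambda).
Proof.
move=> _ [mulL [mulC [mulA [brL _ _ brLeib]]]] a lambda; split.
- exact: gen_eigenspace0.
- exact: gen_eigenspace_linear.
- exact: gen_eigenspace_mul.
move=> x i i0 Ex; rewrite -(upd_id x i).
apply: (gen_eigenspace_derivation mulL mulC mulA (brL x i)) Ex => y z.
exact: brLeib.
Qed.
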